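(* Let $X$ be a set, $B=(B,+,0)$ a unitary magma and $(A,k,q,s,p)$ a retraction point from $X$ to $B$. Suppose that $k(x)+s(b+b')=(k(x)+s(b))+s(b')$ for all $x\in X$ and $b,b'\in B$. Then every retraction point of the form $(B,k',q',s',p')$ (from any set $Y$ to any unitary magma $C$) is composable with $(A,k,q,s,p)$.
   Context: A unitary magma is a set with a binary operation $+$ and an element $0$ with $b+0=b=0+b$ for all $b$; morphisms preserve $+$ and $0$. Given a set $X$ and a unitary magma $B$, a retraction point from $X$ to $B$ is a tuple $(A,k,q,s,p)$ where $A=(A,+,0)$ is a unitary magma, $k\colon X\to A$ and $q\colon A\to X$ are maps, $s\colon B\to A$ and $p\colon A\to B$ are morphisms of unitary magmas, and $p(s(b))=b$, $q(k(x))=x$, $p(k(x))=0$, $q(s(b))=q(0)$, and $k(q(a))+s(p(a))=a$ for all $x\in X$, $b\in B$, $a\in A$. Composability: let $(A,k,q,s,p)$ be a retraction point from $X$ to $B$ and $(B,k',q',s',p')$ a retraction point from a set $Y$ to a unitary magma $C$. Let $A\times_B Y=\{(a,y)\in A\times Y\mid p(a)=k'(y)\}$ with first projection $\pi_1\colon A\times_B Y\to A$, and define $q''\colon A\to A\times_B Y$ by $q''(a)=\big(k(q(a))+s(k'(q'(p(a)))),\ q'(p(a))\big)$. The retraction point $(B,k',q',s',p')$ is said to be composable with $(A,k,q,s,p)$ if $(A,\pi_1,q'',s s',p'p)$ is a retraction point from the set $A\times_B Y$ to $C$. *)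

Set Implicit Arguments.

Record UMagma := {
  car :> Type;
  mop : car -> car -> car;
  mzero : car;
  mop_0r : forall b, mop b mzero = b;
  mop_0l : forall b, mop mzero b = b }.

Arguments mop {_}.
Arguments mzero {_}.

Definition is_morph {M N : UMagma} (f : M -> N) : Prop :=
  (forall x y, f (mop x y) = mop (f x) (f y)) /\ f mzero = mzero.

Definition retraction_point {X : Type} {B A : UMagma}
  (k : X -> A) (q : A -> X) (s : B -> A) (p : A -> B) : Prop :=
  is_morph s /\ is_morph p /\
  (forall b, p (s b) = b) /\
  (forall x, q (k x) = x) /\
  (forall x, p (k x) = mzero) /\
  (forall b, q (s b) = q mzero) /\
  (forall a, mop (k (q a)) (s (p a)) = a).

Definition pullback {A B : UMagma} {Y : Type} (p : A -> B) (k' : Y -> B) :=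
  { ay : A * Y | p (fst ay) = k' (snd ay) }.

Definition pb_proj1 {A B : UMagma} {Y : Type} (p : A -> B) (k' : Y -> B)
  (z : pullback p k') : A := fst (proj1_sig z).

Lemma qpp_in_pullback {X Y : Type} {A B C : UMagma}
  (k : X -> A) (q : A -> X) (s : B -> A) (p : A -> B)
  (k' : Y -> B) (q' : B -> Y) (s' : C -> B) (p' : B -> C) :
  retraction_point k q s p ->
  forall a, p (mop (k (q a)) (s (k' (q' (p a))))) = k' (q' (p a)).
Proof.
  intros [Hs [[Hp Hp0] [Hps [_ [Hpk _]]]]] a.
  rewrite Hp, Hpk, Hps. apply mop_0l.
Qed.

Definition qpp {X Y : Type} {A B C : UMagma}
  (k : X -> A) (q : A -> X) (s : B -> A) (p : A -> B)
  (k' : Y -> B) (q' : B -> Y) (s' : C -> B) (p' : B -> C)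
  (H : retraction_point k q s p) (a : A) : pullback p k' :=
  exist _ (mop (k (q a)) (s (k' (q' (p a)))), q' (p a))
    (qpp_in_pullback k' q' s' p' H a).

Definition composable {X Y : Type} {A B C : UMagma}
  (k : X -> A) (q : A -> X) (s : B -> A) (p : A -> B)
  (k' : Y -> B) (q' : B -> Y) (s' : C -> B) (p' : B -> C)
  (H : retraction_point k q s p) : Prop :=
  retraction_point (@pb_proj1 A B Y p k') (qpp k' q' s' p' H)
    (fun c => s (s' c)) (fun a => p' (p a)).

(* The pullback projection is injective, because a point (a, y) has
   y = q'(k'(y)) = q'(p(a)); so q'' only has to be checked on first components.
   The one axiom with content is k(q a) + s(k'(q'(p a))) + s(s'(p'(p a))) = a:
   the hypothesis on s merges the last two summands into s(k'(q'(p a)) + s'(p'(p a))),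
   which is s(p a) by the axiom of the second retraction point, and then
   k(q a) + s(p a) = a is the axiom of the first one. *)

From Stdlib Require Import ProofIrrelevance.

Lemma is_morph_comp {M N P : UMagma} (f : M -> N) (g : N -> P) :
  is_morph f -> is_morph g -> is_morph (fun x => g (f x)).
Proof.
  intros [Hf Hf0] [Hg Hg0]. split.
  - intros x y. rewrite Hf, Hg. reflexivity.
  - rewrite Hf0, Hg0. reflexivity.
Qed.

Lemma pb_proj1_inj {A B : UMagma} {Y : Type} {p : A -> B} {k' : Y -> B}
  {q' : B -> Y} :
  (forall y, q' (k' y) = y) ->
  forall z1 z2 : pullback p k', pb_proj1 z1 = pb_proj1 z2 -> z1 = z2.
Proof.
  intros Hqk' [[a1 y1] e1] [[a2 y2] e2]. unfold pb_proj1. simpl in *.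
  intros <-. apply subset_eq_compat.
  rewrite <- (Hqk' y1), <- (Hqk' y2), <- e1, <- e2. reflexivity.
Qed.

Section Composite.

Variables (X Y : Type) (A B C : UMagma).
Variables (k : X -> A) (q : A -> X) (s : B -> A) (p : A -> B).
Variables (k' : Y -> B) (q' : B -> Y) (s' : C -> B) (p' : B -> C).
Hypothesis HA : retraction_point k q s p.
Hypothesis HB : retraction_point k' q' s' p'.
Hypothesis s_assoc :
  forall x b b', mop (k x) (s (mop b b')) = mop (mop (k x) (s b)) (s b').

Let q'' := qpp k' q' s' p' HA.

Lemma qpp_pb_proj1 (z : pullback p k') : q'' (pb_proj1 z) = z.
Proof.
  pose proof HA as [_ [_ [_ [_ [_ [_ Hkqsp]]]]]].
  pose proof HB as [_ [_ [_ [Hqk' _]]]].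
  apply (pb_proj1_inj Hqk').
  destruct z as [[a y] e]. unfold q'', qpp, pb_proj1. simpl in *.
  rewrite e, Hqk', <- e. apply Hkqsp.
Qed.

Lemma pb_proj1_qpp_decomp (a : A) :
  mop (pb_proj1 (q'' a)) (s (s' (p' (p a)))) = a.
Proof.
  pose proof HA as [_ [_ [_ [_ [_ [_ Hkqsp]]]]]].
  pose proof HB as [_ [_ [_ [_ [_ [_ Hkqsp']]]]]].
  unfold q'', qpp, pb_proj1. simpl.
  rewrite <- s_assoc, Hkqsp'. apply Hkqsp.
Qed.

Lemma pp'_pb_proj1 (z : pullback p k') : p' (p (pb_proj1 z)) = mzero.
Proof.
  pose proof HB as [_ [_ [_ [_ [Hpk' _]]]]].
  destruct z as [[a y] e]. unfold pb_proj1. simpl in *.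
  rewrite e. apply Hpk'.
Qed.

Lemma qpp_ss' (c : C) : q'' (s (s' c)) = q'' mzero.
Proof.
  pose proof HA as [_ [[_ Hp0] [Hps [_ [_ [Hqs _]]]]]].
  pose proof HB as [_ [_ [_ [Hqk' [_ [Hqs' _]]]]]].
  apply (pb_proj1_inj Hqk'). unfold q'', qpp, pb_proj1. simpl.
  rewrite Hps, Hqs, Hqs', Hp0. reflexivity.
Qed.

End Composite.

Theorem proposition2p2 (X : Type) (A B : UMagma)
  (k : X -> A) (q : A -> X) (s : B -> A) (p : A -> B)
  (H : retraction_point k q s p) :
  (forall x b b', mop (k x) (s (mop b b')) = mop (mop (k x) (s b)) (s b')) ->
  forall (Y : Type) (C : UMagma)
    (k' : Y -> B) (q' : B -> Y) (s' : C -> B) (p' : B -> C),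
    retraction_point k' q' s' p' ->
    composable k' q' s' p' H.
Proof.
  intros s_assoc Y C k' q' s' p' H'.
  pose proof H as [Hs [Hp [Hps _]]].
  pose proof H' as [Hs' [Hp' [Hps' _]]].
  refine (conj _ (conj _ (conj _ (conj _ (conj _ (conj _ _)))))).
  - apply is_morph_comp; assumption.
  - apply is_morph_comp; assumption.
  - intros c. rewrite Hps. apply Hps'.
  - apply qpp_pb_proj1, H'.
  - eapply pp'_pb_proj1, H'.
  - apply qpp_ss', H'.
  - apply pb_proj1_qpp_decomp; assumption.
Qed.
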